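(* Let $P$ be a prime differential algebra and let $Q\subseteq P$ be a differential subalgebra. Then $Q$ is prime.
   Context: All algebras are commutative associative algebras (not necessarily with unity) over a field $k$ of characteristic zero. A differential algebra is such an algebra equipped with a $k$-linear derivation $a\mapsto a'$ (satisfying the Leibniz rule). A differential subalgebra is a subalgebra closed under the derivation; a differential ideal is an ideal $I$ with $I'\subseteq I$. A differential algebra is called prime if for any two nonzero differential ideals $A,B$ one has $AB\neq 0$. *)

From HB Require Import structures.
From mathcomp Require Import all_boot all_order all_algebra.
Set Implicit Arguments. Unset Strict Implicit. Unset Printing Implicit Defensive.
Import GRing.Theory.
Local Open Scope ring_scope.

(* A commutative associative (not necessarily unital) k-algebra equipped with
   a k-linear derivation. *)
Record dalg (k : fieldType) := DAlg {
  dcarrier :> lmodType k;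
  dmul : dcarrier -> dcarrier -> dcarrier;
  dder : dcarrier -> dcarrier;
  dmulA : forall x y z, dmul x (dmul y z) = dmul (dmul x y) z;
  dmulC : forall x y, dmul x y = dmul y x;
  dmul_linear : forall (a : k) x y z, dmul (a *: x + y) z = a *: dmul x z + dmul y z;
  dder_linear : forall (a : k) x y, dder (a *: x + y) = a *: dder x + dder y;
  dder_Leibniz : forall x y, dder (dmul x y) = dmul (dder x) y + dmul x (dder y)
}.

Section DefsSec.
Variables (k : fieldType) (P : dalg k).

Definition is_dsubalg (S : P -> Prop) : Prop :=
  [/\ S 0,
      (forall x y, S x -> S y -> S (x + y)),
      (forall (a : k) x, S x -> S (a *: x)),
      (forall x y, S x -> S y -> S (dmul x y))
    & (forall x, S x -> S (dder x))].

Definition is_dideal_in (S I : P -> Prop) : Prop :=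
  (forall x, I x -> S x) /\
  I 0 /\
  (forall x y, I x -> I y -> I (x + y)) /\
  (forall (a : k) x, I x -> I (a *: x)) /\
  (forall s x, S s -> I x -> I (dmul s x)) /\
  (forall x, I x -> I (dder x)).

Definition nonzero_set (I : P -> Prop) : Prop := exists x, I x /\ x <> 0.

(* membership in the product ideal IJ: finite sums of products a b, a in I, b in J *)
Definition prod_mem (I J : P -> Prop) (x : P) : Prop :=
  exists s : seq (P * P),
    (forall p, p \in s -> I p.1 /\ J p.2) /\
    x = \sum_(p <- s) dmul p.1 p.2.

Definition dprime_on (S : P -> Prop) : Prop :=
  forall I J : P -> Prop,
    is_dideal_in S I -> is_dideal_in S J ->
    nonzero_set I -> nonzero_set J ->
    nonzero_set (prod_mem I J).

Definition dprime : Prop := dprime_on (fun _ => True).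
End DefsSec.

From mathcomp Require Import all_boot all_order all_algebra.
From Stdlib Require Import Classical.
Set Implicit Arguments. Unset Strict Implicit. Unset Printing Implicit Defensive.
Import GRing.Theory.
Local Open Scope ring_scope.

(* If the differential ideals I, J of Q had zero product, then J would lie in
   the annihilator Ann_P(I), which is a differential ideal of P because I is
   stable under the derivation.  In the prime algebra P the annihilator of a
   nonzero derivation-stable set S vanishes: otherwise Ann_P(S) and
   Ann_P(Ann_P(S)) (which contains S) would be nonzero differential ideals of P
   with zero product.  Hence J = 0. *)

Section DifferentialAlgebra.
Variables (k : fieldType) (P : dalg k).

Lemma dmulDl x y z : dmul (x + y) z = dmul x z + dmul (y : P) z.
Proof. by have := dmul_linear 1 x y z; rewrite !scale1r. Qed.

Lemma dmul0l z : dmul (0 : P) z = 0.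
Proof. by apply: (@addrI _ (dmul 0 z)); rewrite -dmulDl !addr0. Qed.

Lemma dmul0r z : dmul z (0 : P) = 0.
Proof. by rewrite dmulC dmul0l. Qed.

Lemma dmulZl a x z : dmul (a *: x) z = a *: dmul (x : P) z.
Proof. by have := dmul_linear a x 0 z; rewrite addr0 dmul0l addr0. Qed.

Lemma dder0 : dder (0 : P) = 0.
Proof.
apply: (@addrI _ (dder (0 : P))); rewrite addr0.
by have := dder_linear 1 (0 : P) 0; rewrite addr0 !scale1r.
Qed.

Lemma dideal_dder (S I : P -> Prop) x : is_dideal_in S I -> I x -> I (dder x).
Proof. by case=> [_ [_ [_ [_ [_ Id]]]]]; apply: Id. Qed.

Lemma prod_mem_dmul (I J : P -> Prop) x y :
  I x -> J y -> prod_mem I J (dmul x y).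
Proof.
move=> Ix Jy; exists [:: (x, y)]; split; last by rewrite big_seq1.
by move=> p; rewrite inE => /eqP ->.
Qed.

Definition ann (S : P -> Prop) : P -> Prop :=
  fun x => forall s, S s -> dmul s x = 0.

Lemma ann_ann (S : P -> Prop) x : S x -> ann (ann S) x.
Proof. by move=> Sx y Ay; rewrite dmulC Ay. Qed.

Lemma ann_dideal (S : P -> Prop) : (forall s, S s -> S (dder s)) ->
  is_dideal_in (fun _ => True) (ann S).
Proof.
move=> Sd; do !split => //.
- by move=> s _; rewrite dmul0r.
- by move=> x y Ax Ay s Ss; rewrite dmulC dmulDl !(dmulC _ s) Ax ?Ay ?addr0.
- by move=> a x Ax s Ss; rewrite dmulC dmulZl dmulC Ax ?scaler0.
- by move=> p x _ Ax s Ss; rewrite dmulA (dmulC s) -dmulA Ax ?dmul0r.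
- move=> x Ax s Ss; have := dder_Leibniz s x.
  by rewrite (Ax s Ss) (Ax _ (Sd s Ss)) dder0 add0r => <-.
Qed.

Lemma prod_mem_ann_eq0 (S : P -> Prop) x : prod_mem S (ann S) x -> x = 0.
Proof.
case=> s [Hs ->]; rewrite big1_seq // => p /andP [_ ps].
by have [Sp1 Ap2] := Hs p ps; apply: Ap2.
Qed.

Lemma dprime_ann_eq0 (S : P -> Prop) :
  dprime P -> (forall s, S s -> S (dder s)) -> nonzero_set S ->
  forall x, ann S x -> x = 0.
Proof.
move=> Pprime Sd [s [Ss s0]] x Ax; apply: NNPP => x0.
have Ad : forall y, ann S y -> ann S (dder y).
  by move=> y; apply: dideal_dder (ann_dideal Sd).
have [y [Hy y0]] := Pprime _ _ (ann_dideal Sd) (ann_dideal Ad)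
  (ex_intro _ x (conj Ax x0)) (ex_intro _ s (conj (ann_ann Ss) s0)).
exact: y0 (prod_mem_ann_eq0 Hy).
Qed.

End DifferentialAlgebra.

Theorem lemma2 (k : fieldType) (hk : [pchar k]%R =i pred0) (P : dalg k)
  (Q : P -> Prop) :
  dprime P -> is_dsubalg Q -> dprime_on Q.
Proof.
move=> Pprime _ I J hI hJ Inz [b [Jb b0]]; apply: NNPP => IJ0.
have b_ann : ann I b.
  move=> a Ia; apply: NNPP => ab0; apply: IJ0.
  by exists (dmul a b); split=> //; apply: prod_mem_dmul.
have Id : forall a, I a -> I (dder a) by move=> a; apply: dideal_dder hI.
exact: b0 (dprime_ann_eq0 Pprime Id Inz b_ann).
Qed.
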